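(* Let $b>0$ and $\varepsilon\in\mathbb{R}$. If $u(t,x)$ solves $u_t=xu_{xx}+bu_x$, then $$\tilde u_\varepsilon(t,x)=(1+\varepsilon t)^{-b}\exp\!\left(\frac{-\varepsilon x}{1+\varepsilon t}\right)u\!\left(\frac{t}{1+\varepsilon t},\ \frac{x}{(1+\varepsilon t)^2}\right)$$ is also a solution wherever $1+\varepsilon t>0$ and the argument lies in the domain of $u$. In particular, for constants $c_0,c_1$, $$u_\varepsilon(t,x)=(1+\varepsilon t)^{-b}\exp\!\left(\frac{-\varepsilon x}{1+\varepsilon t}\right)\left[c_0+c_1(1+\varepsilon t)^{2(b-1)}x^{1-b}\right]\ (b\neq1),$$ $$u_\varepsilon(t,x)=(1+\varepsilon t)^{-1}\exp\!\left(\frac{-\varepsilon x}{1+\varepsilon t}\right)\left[c_0+c_1\log\frac{\sqrt x}{1+\varepsilon t}\right]\ (b=1),$$ are solutions for $x>0$, $1+\varepsilon t>0$. *)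

From Stdlib Require Import Reals.
Open Scope R_scope.

Definition open2 (D : R -> R -> Prop) : Prop :=
  forall t x, D t x -> exists d, 0 < d /\
    forall s y, Rabs (s - t) < d -> Rabs (y - x) < d -> D s y.

Definition cont2_at (f : R -> R -> R) (t x : R) : Prop :=
  forall e, 0 < e -> exists d, 0 < d /\
    forall s y, Rabs (s - t) < d -> Rabs (y - x) < d ->
      Rabs (f s y - f t x) < e.

Definition is_solution (b : R) (D : R -> R -> Prop) (u : R -> R -> R) : Prop :=
  exists ut ux uxx : R -> R -> R,
    forall t x, D t x ->
      derivable_pt_lim (fun s => u s x) t (ut t x) /\
      derivable_pt_lim (fun y => u t y) x (ux t x) /\
      derivable_pt_lim (fun y => ux t y) x (uxx t x) /\
      cont2_at ut t x /\ cont2_at ux t x /\ cont2_at uxx t x /\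
      ut t x = x * uxx t x + b * ux t x.

Definition transf (b eps : R) (u : R -> R -> R) (t x : R) : R :=
  Rpower (1 + eps * t) (- b) * exp (- eps * x / (1 + eps * t))
  * u (t / (1 + eps * t)) (x / (1 + eps * t) ^ 2).

Definition transf_dom (eps : R) (D : R -> R -> Prop) (t x : R) : Prop :=
  0 < 1 + eps * t /\ D (t / (1 + eps * t)) (x / (1 + eps * t) ^ 2).

From Stdlib Require Import Reals Lra.
From Coquelicot Require Import Coquelicot.
Open Scope R_scope.

(* Write a = 1 + eps t.  Differentiating a^{-b} exp(-eps x / a) u(t / a, x / a^2)
   by the chain rule, the terms coming from the gauge factor cancel against
   those coming from the rescaling, and what is left is a^{-b-2} exp(-eps x / a) (u_t - x u_xx - b u_x) at the
   rescaled point.  The explicit solutions are the images of the stationary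
   solutions c0 + c1 x^{1-b} and c0 + c1 (ln x) / 2. *)

Lemma cont2_at_continuity_2d_pt f t x : cont2_at f t x <-> continuity_2d_pt f t x.
Proof.
split.
- intros H e; destruct (H e (cond_pos e)) as [d [Hd H']].
  exists (mkposreal d Hd); exact H'.
- intros H e He; destruct (H (mkposreal e He)) as [d H'].
  exists d; split; [apply cond_pos | exact H'].
Qed.

Lemma continuity_2d_pt_comp_2d (F g h : R -> R -> R) t x :
  continuity_2d_pt F (g t x) (h t x) -> continuity_2d_pt g t x ->
  continuity_2d_pt h t x -> continuity_2d_pt (fun s y => F (g s y) (h s y)) t x.
Proof.
intros HF Hg Hh e. destruct (HF e) as [d1 H1].
destruct (Hg d1) as [d2 H2]. destruct (Hh d1) as [d3 H3].
assert (Hd : 0 < Rmin d2 d3) by (apply Rmin_pos; apply cond_pos).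
exists (mkposreal _ Hd); simpl; intros s y Hs Hy.
assert (Rmin d2 d3 <= d2) by apply Rmin_l. assert (Rmin d2 d3 <= d3) by apply Rmin_r.
apply H1; [apply H2 | apply H3]; lra.
Qed.

Lemma continuity_2d_pt_div (f g : R -> R -> R) t x : continuity_2d_pt f t x ->
  continuity_2d_pt g t x -> g t x <> 0 ->
  continuity_2d_pt (fun s y => f s y / g s y) t x.
Proof.
intros; apply continuity_2d_pt_mult; auto. apply continuity_2d_pt_inv; auto.
Qed.

(* Reduces joint continuity of an elementary expression to that of its atoms;
   unrecognised atoms and nonvanishing conditions are left as goals. *)
Ltac continuity_2d :=
  cbv beta;
  match goal with
  | |- continuity_2d_pt (fun _ _ => ?c) _ _ => apply continuity_2d_pt_const
  | |- continuity_2d_pt (fun u _ => u) _ _ => apply continuity_2d_pt_id1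
  | |- continuity_2d_pt (fun _ v => v) _ _ => apply continuity_2d_pt_id2
  | |- continuity_2d_pt (fun u v => @?f u v + @?g u v) _ _ =>
      apply (continuity_2d_pt_plus f g); continuity_2d
  | |- continuity_2d_pt (fun u v => @?f u v - @?g u v) _ _ =>
      apply (continuity_2d_pt_minus f g); continuity_2d
  | |- continuity_2d_pt (fun u v => @?f u v * @?g u v) _ _ =>
      apply (continuity_2d_pt_mult f g); continuity_2d
  | |- continuity_2d_pt (fun u v => @?f u v / @?g u v) _ _ =>
      apply (continuity_2d_pt_div f g); [continuity_2d | continuity_2d |]
  | |- continuity_2d_pt (fun u v => - @?f u v) _ _ =>
      apply (continuity_2d_pt_opp f); continuity_2d
  | |- continuity_2d_pt (fun u v => / @?f u v) _ _ =>
      apply (continuity_2d_pt_inv f); [continuity_2d |]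
  | |- continuity_2d_pt (fun u v => (@?f u v) ^ ?n) _ _ =>
      apply (continuity_1d_2d_pt_comp (fun z => z ^ n) f);
      [apply derivable_continuous_pt, derivable_pt_pow | continuity_2d]
  | |- continuity_2d_pt (fun u v => exp (@?f u v)) _ _ =>
      apply (continuity_1d_2d_pt_comp exp f);
      [apply derivable_continuous_pt, derivable_pt_exp | continuity_2d]
  | |- continuity_2d_pt (fun u v => ln (@?f u v)) _ _ =>
      apply (continuity_1d_2d_pt_comp ln f);
      [apply continuity_pt_filterlim, continuous_ln | continuity_2d]
  | |- continuity_2d_pt (fun u v => Rpower (@?f u v) (@?g u v)) _ _ =>
      unfold Rpower; continuity_2d
  | _ => idtac
  end.

Lemma differentiable_pt_lim_of_partials (D : R -> R -> Prop) (u ut : R -> R -> R)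
    (ux : R) t x :
  open2 D -> D t x ->
  (forall s y, D s y -> derivable_pt_lim (fun z => u z y) s (ut s y)) ->
  derivable_pt_lim (fun y => u t y) x ux -> cont2_at ut t x ->
  differentiable_pt_lim u t x (ut t x) ux.
Proof.
intros HD Hd Hut Hux Hc.
apply filterdiff_differentiable_pt_lim.
eapply filterdiff_ext_lin.
- apply (is_derive_filterdiff u t x ut ux).
  + apply locally_2d_locally
      with (P := fun s y => is_derive (fun z => u z y) s (ut s y)).
    destruct (HD t x Hd) as [d [Hd0 Hd']]. exists (mkposreal d Hd0); simpl.
    intros; apply is_derive_Reals, Hut, Hd'; assumption.
  + apply is_derive_Reals; exact Hux.
  + apply continuity_2d_pt_filterlim, cont2_at_continuity_2d_pt; exact Hc.
- reflexivity.
Qed.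

Lemma derivable_pt_lim_mult_eq f g x df dg l :
  derivable_pt_lim f x df -> derivable_pt_lim g x dg ->
  df * g x + f x * dg = l -> derivable_pt_lim (fun s => f s * g s) x l.
Proof. intros Hf Hg <-; exact (derivable_pt_lim_mult f g x df dg Hf Hg). Qed.

Section Transformation.

Variables b eps : R.

Definition gauge t x := Rpower (1 + eps * t) (- b) * exp (- eps * x / (1 + eps * t)).

Definition rescale (f : R -> R -> R) t x := f (t / (1 + eps * t)) (x / (1 + eps * t) ^ 2).

Lemma gauge_dt t x : 0 < 1 + eps * t ->
  derivable_pt_lim (fun s => gauge s x) t
    (gauge t x * (- b * eps / (1 + eps * t) + eps ^ 2 * x / (1 + eps * t) ^ 2)).
Proof.
intros Ha. apply is_derive_Reals. unfold gauge, Rpower. auto_derive.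
- repeat split; lra.
- unfold Rdiv; field; lra.
Qed.

Lemma gauge_dx t x : 0 < 1 + eps * t ->
  derivable_pt_lim (fun y => gauge t y) x (gauge t x * (- eps / (1 + eps * t))).
Proof.
intros Ha. apply is_derive_Reals. unfold gauge, Rpower. auto_derive.
- repeat split; lra.
- unfold Rdiv; field; lra.
Qed.

Lemma gauge_continuity t x : 0 < 1 + eps * t -> continuity_2d_pt gauge t x.
Proof. intros Ha. unfold gauge. continuity_2d; lra. Qed.

Lemma rescale_dt f ft fx t x : 1 + eps * t <> 0 ->
  differentiable_pt_lim f (t / (1 + eps * t)) (x / (1 + eps * t) ^ 2) ft fx ->
  derivable_pt_lim (fun s => rescale f s x) t
    (ft / (1 + eps * t) ^ 2 - 2 * eps * x / (1 + eps * t) ^ 3 * fx).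
Proof.
intros Ha Hf.
assert (Hs : derivable_pt_lim (fun s => s / (1 + eps * s)) t (/ (1 + eps * t) ^ 2)).
{ apply is_derive_Reals; auto_derive; [repeat split; auto | field; auto]. }
assert (Hy : derivable_pt_lim (fun s => x / (1 + eps * s) ^ 2) t
               (- 2 * eps * x / (1 + eps * t) ^ 3)).
{ apply is_derive_Reals; auto_derive; [repeat split; auto | field; auto]. }
replace (ft / (1 + eps * t) ^ 2 - 2 * eps * x / (1 + eps * t) ^ 3 * fx)
  with (ft * / (1 + eps * t) ^ 2 + fx * (- 2 * eps * x / (1 + eps * t) ^ 3))
  by (field; auto).
exact (derivable_pt_lim_comp_2d f _ _ t _ _ _ _ Hf Hs Hy).
Qed.

Lemma rescale_dx f l t x : 1 + eps * t <> 0 ->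
  derivable_pt_lim (f (t / (1 + eps * t))) (x / (1 + eps * t) ^ 2) l ->
  derivable_pt_lim (fun y => rescale f t y) x (l / (1 + eps * t) ^ 2).
Proof.
intros Ha Hf.
assert (Hy : derivable_pt_lim (fun y => y / (1 + eps * t) ^ 2) x (/ (1 + eps * t) ^ 2)).
{ apply is_derive_Reals; auto_derive; [exact I | field; auto using pow_nonzero]. }
unfold Rdiv at 1. exact (derivable_pt_lim_comp _ _ x _ _ Hy Hf).
Qed.

Lemma rescale_continuity f t x : 1 + eps * t <> 0 ->
  continuity_2d_pt f (t / (1 + eps * t)) (x / (1 + eps * t) ^ 2) ->
  continuity_2d_pt (rescale f) t x.
Proof.
intros Ha Hf. apply (continuity_2d_pt_comp_2d f); [exact Hf | |];
  continuity_2d; auto using pow_nonzero.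
Qed.

Variables u ut ux uxx : R -> R -> R.

Definition transf_t t x := gauge t x *
  ((- b * eps / (1 + eps * t) + eps ^ 2 * x / (1 + eps * t) ^ 2) * rescale u t x
   + rescale ut t x / (1 + eps * t) ^ 2
   - 2 * eps * x / (1 + eps * t) ^ 3 * rescale ux t x).

Definition transf_x t x := gauge t x *
  (- eps / (1 + eps * t) * rescale u t x + / (1 + eps * t) ^ 2 * rescale ux t x).

Definition transf_xx t x := gauge t x *
  (eps ^ 2 / (1 + eps * t) ^ 2 * rescale u t x
   - 2 * eps / (1 + eps * t) ^ 3 * rescale ux t x
   + rescale uxx t x / (1 + eps * t) ^ 4).

Lemma transf_dt t x : 0 < 1 + eps * t ->
  differentiable_pt_lim u (t / (1 + eps * t)) (x / (1 + eps * t) ^ 2)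
    (rescale ut t x) (rescale ux t x) ->
  derivable_pt_lim (fun s => transf b eps u s x) t (transf_t t x).
Proof.
intros Ha Hu.
apply (derivable_pt_lim_mult_eq _ _ _ _ _ _ (gauge_dt t x Ha)
        (rescale_dt u _ _ t x ltac:(lra) Hu)).
unfold transf_t. field; lra.
Qed.

Lemma transf_dx t x : 0 < 1 + eps * t ->
  derivable_pt_lim (u (t / (1 + eps * t))) (x / (1 + eps * t) ^ 2) (rescale ux t x) ->
  derivable_pt_lim (fun y => transf b eps u t y) x (transf_x t x).
Proof.
intros Ha Hu.
apply (derivable_pt_lim_mult_eq _ _ _ _ _ _ (gauge_dx t x Ha)
        (rescale_dx u _ t x ltac:(lra) Hu)).
unfold transf_x. field; lra.
Qed.

Lemma transf_dxx t x : 0 < 1 + eps * t ->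
  derivable_pt_lim (u (t / (1 + eps * t))) (x / (1 + eps * t) ^ 2) (rescale ux t x) ->
  derivable_pt_lim (ux (t / (1 + eps * t))) (x / (1 + eps * t) ^ 2) (rescale uxx t x) ->
  derivable_pt_lim (fun y => transf_x t y) x (transf_xx t x).
Proof.
intros Ha Hu Hux. unfold transf_x.
eapply (derivable_pt_lim_mult_eq _ _ _ _ _ _ (gauge_dx t x Ha)).
- apply derivable_pt_lim_plus; apply derivable_pt_lim_scal;
    apply rescale_dx; [lra | exact Hu | lra | exact Hux].
- unfold transf_xx. field; lra.
Qed.

Lemma transf_derivatives_continuity t x : 0 < 1 + eps * t ->
  continuity_2d_pt (rescale u) t x -> continuity_2d_pt (rescale ut) t x ->
  continuity_2d_pt (rescale ux) t x -> continuity_2d_pt (rescale uxx) t x ->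
  continuity_2d_pt transf_t t x /\ continuity_2d_pt transf_x t x /\
  continuity_2d_pt transf_xx t x.
Proof.
intros Ha Cu Ct Cx Cxx.
unfold transf_t, transf_x, transf_xx.
repeat split; continuity_2d; auto using gauge_continuity;
  try lra; apply pow_nonzero; lra.
Qed.

End Transformation.

Lemma is_solution_transf b eps (D : R -> R -> Prop) (u : R -> R -> R) :
  open2 D -> is_solution b D u -> is_solution b (transf_dom eps D) (transf b eps u).
Proof.
intros HD [ut [ux [uxx Hu]]].
exists (transf_t b eps u ut ux), (transf_x b eps u ux), (transf_xx b eps u ux uxx).
intros t x [Ha Hd].
destruct (Hu _ _ Hd) as (Dt & Dx & Dxx & Ct & Cx & Cxx & Eq).
assert (Hdiff := differentiable_pt_lim_of_partials D u ut _ _ _ HD Hd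
                   (fun s y Hsy => proj1 (Hu s y Hsy)) Dx Ct).
assert (Cu : continuity_2d_pt u (t / (1 + eps * t)) (x / (1 + eps * t) ^ 2)).
{ apply differentiable_continuity_pt; do 2 eexists; exact Hdiff. }
assert (Hne : 1 + eps * t <> 0) by lra.
apply cont2_at_continuity_2d_pt in Ct, Cx, Cxx.
destruct (transf_derivatives_continuity b eps u ut ux uxx t x Ha
  (rescale_continuity eps u t x Hne Cu) (rescale_continuity eps ut t x Hne Ct)
  (rescale_continuity eps ux t x Hne Cx) (rescale_continuity eps uxx t x Hne Cxx))
  as (Ct' & Cx' & Cxx').
rewrite !cont2_at_continuity_2d_pt.
repeat split; auto using transf_dt, transf_dx, transf_dxx.
unfold transf_t, transf_x, transf_xx, rescale. rewrite Eq.
field; exact Hne.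
Qed.

Lemma is_solution_sub b (D D' : R -> R -> Prop) u :
  (forall t x, D' t x -> D t x) -> is_solution b D u -> is_solution b D' u.
Proof.
intros HDD [ut [ux [uxx H]]]. exists ut, ux, uxx. intros t x Hd. apply H, HDD, Hd.
Qed.

Lemma is_solution_ext b (D : R -> R -> Prop) (u v : R -> R -> R) :
  open2 D -> (forall t x, D t x -> u t x = v t x) ->
  is_solution b D u -> is_solution b D v.
Proof.
intros HD Heq [ut [ux [uxx H]]]. exists ut, ux, uxx. intros t x Hd.
destruct (H t x Hd) as (Dt & Dx & Rest).
assert (L : locally_2d (fun s y => u s y = v s y) t x).
{ destruct (HD t x Hd) as [d [Hd0 Hd']]. exists (mkposreal d Hd0); simpl.
  intros; apply Heq, Hd'; assumption. }
split; [|split; [|exact Rest]]; apply is_derive_Reals.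
- apply (is_derive_ext_loc (fun s => u s x)).
  + exact (locally_2d_1d_const_y _ t x L).
  + apply is_derive_Reals; exact Dt.
- apply (is_derive_ext_loc (fun y => u t y)).
  + exact (locally_2d_1d_const_x _ t x L).
  + apply is_derive_Reals; exact Dx.
Qed.

Lemma open2_and (D D' : R -> R -> Prop) :
  open2 D -> open2 D' -> open2 (fun t x => D t x /\ D' t x).
Proof.
intros HD HD' t x [Hd Hd'].
destruct (HD t x Hd) as [d [Hd0 H]]. destruct (HD' t x Hd') as [d' [Hd0' H']].
exists (Rmin d d'). split; [apply Rmin_pos; assumption|].
intros s y Hs Hy.
assert (Rmin d d' <= d) by apply Rmin_l. assert (Rmin d d' <= d') by apply Rmin_r.
split; [apply H | apply H']; lra.
Qed.

Lemma open2_pos_x : open2 (fun _ x => 0 < x).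
Proof.
intros t x Hx. exists x. split; [exact Hx|]. intros s y _ Hy.
apply Rabs_def2 in Hy. lra.
Qed.

Lemma open2_pos_affine eps : open2 (fun t _ => 0 < 1 + eps * t).
Proof.
intros t x Ha.
set (k := (1 + eps * t) / (Rabs eps + 1)).
assert (HR : 0 <= Rabs eps) by apply Rabs_pos.
assert (Hk : k * (Rabs eps + 1) = 1 + eps * t) by (unfold k; field; lra).
assert (Hk0 : 0 < k) by (unfold k; apply Rdiv_lt_0_compat; lra).
exists k. split; [exact Hk0|].
intros s y Hs _.
assert (H : Rabs (eps * (s - t)) < 1 + eps * t).
{ rewrite Rabs_mult. assert (0 <= Rabs (s - t)) by apply Rabs_pos. nra. }
apply Rabs_def2 in H. lra.
Qed.

Lemma is_solution_transf_pos_x b eps u :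
  is_solution b (fun _ x => 0 < x) u ->
  is_solution b (fun t x => 0 < x /\ 0 < 1 + eps * t) (transf b eps u).
Proof.
intros Hu. apply (is_solution_sub b (transf_dom eps (fun _ x => 0 < x))).
- intros t x [Hx Ha]. split; [exact Ha|].
  apply Rdiv_lt_0_compat; [exact Hx | apply pow_lt; exact Ha].
- exact (is_solution_transf b eps _ u open2_pos_x Hu).
Qed.

Lemma is_solution_power b c0 c1 :
  is_solution b (fun _ x => 0 < x) (fun _ x => c0 + c1 * Rpower x (1 - b)).
Proof.
exists (fun _ _ => 0), (fun _ x => c1 * ((1 - b) * Rpower x (- b))),
  (fun _ x => c1 * ((1 - b) * (- b * Rpower x (- b - 1)))).
intros t x Hx.
assert (Dpow := derivable_pt_lim_power x).
repeat split.
- apply derivable_pt_lim_const.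
- replace (c1 * ((1 - b) * Rpower x (- b)))
    with (0 + c1 * ((1 - b) * Rpower x (1 - b - 1))) 
    by (replace (1 - b - 1) with (- b) by ring; ring).
  apply derivable_pt_lim_plus; [apply derivable_pt_lim_const|].
  apply derivable_pt_lim_scal, Dpow, Hx.
- apply derivable_pt_lim_scal, derivable_pt_lim_scal, Dpow, Hx.
- apply cont2_at_continuity_2d_pt; continuity_2d.
- apply cont2_at_continuity_2d_pt; continuity_2d; exact Hx.
- apply cont2_at_continuity_2d_pt; continuity_2d; exact Hx.
- replace (Rpower x (- b)) with (x * Rpower x (- b - 1)); [ring|].
  replace (- b) with (1 + (- b - 1)) at 2 by ring.
  rewrite Rpower_plus, Rpower_1; [reflexivity | exact Hx].
Qed.

Lemma is_solution_ln c0 c1 :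
  is_solution 1 (fun _ x => 0 < x) (fun _ x => c0 + c1 * (ln x / 2)).
Proof.
exists (fun _ _ => 0), (fun _ x => c1 / (2 * x)), (fun _ x => - c1 / (2 * x ^ 2)).
intros t x Hx.
assert (Hx2 : 2 * x ^ 2 <> 0) by (apply Rmult_integral_contrapositive;
  split; [lra | apply pow_nonzero; lra]).
repeat split.
- apply derivable_pt_lim_const.
- apply is_derive_Reals. auto_derive; [exact Hx | field; lra].
- apply is_derive_Reals. auto_derive; [lra | field; lra].
- apply cont2_at_continuity_2d_pt; continuity_2d.
- apply cont2_at_continuity_2d_pt; continuity_2d; lra.
- apply cont2_at_continuity_2d_pt; continuity_2d; exact Hx2.
- field; lra.
Qed.

Lemma Rpower_div_sq x a p : 0 < x -> 0 < a ->
  Rpower (x / a ^ 2) p = Rpower a (- 2 * p) * Rpower x p.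
Proof.
intros Hx Ha. unfold Rpower.
rewrite ln_div, ln_pow, <- exp_plus by (try apply pow_lt; assumption).
f_equal. simpl INR. ring.
Qed.

Lemma ln_sqrt_div x a : 0 < x -> 0 < a -> ln (sqrt x / a) = ln (x / a ^ 2) / 2.
Proof.
intros Hx Ha.
rewrite <- Rpower_sqrt, !ln_div, ln_Rpower, ln_pow by
  (try apply pow_lt; try rewrite Rpower_sqrt; try apply sqrt_lt_R0; assumption).
simpl INR. field.
Qed.

Theorem mainTheorem14 (b eps : R) (hb : 0 < b) :
  (forall (D : R -> R -> Prop) (u : R -> R -> R),
      open2 D -> is_solution b D u ->
      is_solution b (transf_dom eps D) (transf b eps u))
  /\
  (forall c0 c1 : R, b <> 1 ->
      is_solution b (fun t x => 0 < x /\ 0 < 1 + eps * t)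
        (fun t x => Rpower (1 + eps * t) (- b) * exp (- eps * x / (1 + eps * t))
           * (c0 + c1 * Rpower (1 + eps * t) (2 * (b - 1)) * Rpower x (1 - b))))
  /\
  (forall c0 c1 : R, b = 1 ->
      is_solution b (fun t x => 0 < x /\ 0 < 1 + eps * t)
        (fun t x => Rpower (1 + eps * t) (- 1) * exp (- eps * x / (1 + eps * t))
           * (c0 + c1 * ln (sqrt x / (1 + eps * t))))).
Proof.
assert (Hopen := open2_and _ _ open2_pos_x (open2_pos_affine eps)); cbv beta in Hopen.
split; [|split].
- exact (is_solution_transf b eps).
- intros c0 c1 _.
  eapply (is_solution_ext b _ _ _ Hopen);
    [| exact (is_solution_transf_pos_x b eps _ (is_solution_power b c0 c1))].
  intros t x [Hx Ha]. unfold transf.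
  rewrite Rpower_div_sq by assumption.
  replace (- 2 * (1 - b)) with (2 * (b - 1)) by ring. ring.
- intros c0 c1 ->.
  eapply (is_solution_ext 1 _ _ _ Hopen);
    [| exact (is_solution_transf_pos_x 1 eps _ (is_solution_ln c0 c1))].
  intros t x [Hx Ha]. unfold transf.
  rewrite ln_sqrt_div by assumption. reflexivity.
Qed.
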